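(* Let $\mathcal{A}=(\mathcal{A},m,f)$ be a presheaf of $k$-algebras on a small category $\mathcal{U}$, with Gerstenhaber–Schack complex $\mathbf{C}_{\mathrm{GS}}(\mathcal{A})$. \begin{enumerate} \item (a) For $(m_1,f_1,c_1)\in \mathbf{C}^{0,2}(\mathcal{A})\oplus\mathbf{C}^{1,1}(\mathcal{A})\oplus\mathbf{C}^{2,0}(\mathcal{A})$, the tuple $(\mathcal{A}[\epsilon],\bar m=m+m_1\epsilon,\bar f=f+f_1\epsilon,\bar c=1+c_1\epsilon)$ is a first order twisted deformation of $\mathcal{A}$ if and only if $(m_1,f_1,c_1)\in\bar{\mathbf{C}}'^2_{\mathrm{GS}}(\mathcal{A})$ and $d_{\mathrm{GS}}(m_1,f_1,c_1)=0$. (b) For $(m_1,f_1)\in \mathbf{C}^{0,2}(\mathcal{A})\oplus\mathbf{C}^{1,1}(\mathcal{A})$, the tuple $(\mathcal{A}[\epsilon],m+m_1\epsilon,f+f_1\epsilon)$ is a first order presheaf deformation of $\mathcal{A}$ if and only if $(m_1,f_1)\in\bar{\mathbf{C}}'^2_{\mathrm{tGS}}(\mathcal{A})$ and $d_{\mathrm{GS}}(m_1,f_1)=0$. \item (a) For $(m_1,f_1,c_1),(m_1',f_1',c_1')\in Z^2\bar{\mathbf{C}}'_{\mathrm{GS}}(\mathcal{A})$ with associated twisted deformations $\bar{\mathcal{A}},\bar{\mathcal{A}}'$, and $(g_1,-\tau_1)\in\mathbf{C}^{0,1}(\mathcal{A})\oplus\mathbf{C}^{1,0}(\mathcal{A})$,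 the pair $(g,\tau)=(1+g_1\epsilon,1+\tau_1\epsilon)$ is an isomorphism of twisted presheaves $\bar{\mathcal{A}}\to\bar{\mathcal{A}}'$ if and only if $(g_1,-\tau_1)\in\bar{\mathbf{C}}'^1_{\mathrm{GS}}(\mathcal{A})$ and $d_{\mathrm{GS}}(g_1,-\tau_1)=(m_1,f_1,c_1)-(m_1',f_1',c_1')$. (b) For $(m_1,f_1),(m_1',f_1')\in Z^2\bar{\mathbf{C}}'_{\mathrm{tGS}}(\mathcal{A})$ and $g_1\in\mathbf{C}^{0,1}(\mathcal{A})$, the family $g=1+g_1\epsilon$ is an isomorphism of presheaves between the associated presheaf deformations if and only if $g_1\in\bar{\mathbf{C}}'^1_{\mathrm{tGS}}(\mathcal{A})$ and $d_{\mathrm{GS}}(g_1)=(m_1,f_1)-(m_1',f_1')$. \item (a) The assignment sending the class of a cocycle $(m_1,f_1,c_1)$ to the class of $(\mathcal{A}[\epsilon],m+m_1\epsilon,f+f_1\epsilon,1+c_1\epsilon)$ is a well-defined bijection $H^2\bar{\mathbf{C}}'_{\mathrm{GS}}(\mathcal{A})\to\mathrm{Def}_{\mathrm{tw}}(\mathcal{A})$; hence the second Hochschild cohomology $HH^2(\mathcal{A})\cong H^2\bar{\mathbf{C}}'_{\mathrm{GS}}(\mathcal{A})$ classifies first order twisted deformations of $\mathcal{A}$ up to equivalence. (b) Similarly the class of $(m_1,f_1)$ maps to the class of $(\mathcal{A}[\epsilon],m+m_1\epsilon,f+f_1\epsilon)$, giving a bijection $H^2\bar{\mathbf{C}}'_{\mathrm{tGS}}(\mathcal{A})\to\mathrm{Def}_{\mathrm{pr}}(\mathcal{A})$,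 so $H^2\bar{\mathbf{C}}'_{\mathrm{tGS}}(\mathcal{A})$ classifies first order presheaf deformations of $\mathcal{A}$ up to equivalence. \end{enumerate}
   Context: $k$ is a commutative ring with unit, $k[\epsilon]=k[\epsilon]/(\epsilon^2)$; algebras are unital associative and algebra maps preserve units. For a presheaf $\mathcal{A}$ of $k$-algebras on a small category $\mathcal{U}$ write $m^U$ for the multiplication of $\mathcal{A}(U)$ and $f^u=u^*\colon\mathcal{A}(U)\to\mathcal{A}(V)$ for the restriction along $u\colon V\to U$. Nerve: a $p$-simplex is $\sigma=(U_0\xrightarrow{u_1}U_1\to\cdots\xrightarrow{u_p}U_p)$, $d\sigma=U_0$, $c\sigma=U_p$, $f^\sigma=f^{u_p\cdots u_1}$; $\sigma$ is degenerate if some $u_i$ is an identity. For a $(p+1)$-simplex $\sigma$: $\partial_0\sigma$ deletes $U_0$, $\partial_{p+1}\sigma$ deletes $U_{p+1}$, and $\partial_i\sigma$ ($1\le i\le p$) replaces $U_{i-1}\to U_i\to U_{i+1}$ by $u_{i+1}u_i$. Gerstenhaber–Schack (GS) complex: $\mathbf{C}^{p,q}(\mathcal{A})=\prod_{\sigma\in\mathcal{N}_p(\mathcal{U})}\mathrm{Hom}_k(\mathcal{A}(c\sigma)^{\otimes q},\mathcal{A}(d\sigma))$, with $\mathcal{A}(d\sigma)$ an $\mathcal{A}(c\sigma)$-bimodule via $f^\sigma$. Vertical differential $d_{\mathrm{Hoch}}$ is componentwise the Hochschild differential $d\phi(a_n,\dots,a_0)=a_n\phi(a_{n-1},\dots,a_0)+\sum_{i=0}^{n-1}(-1)^{i+1}\phi(a_n,\dots,a_{n-i}a_{n-i-1},\dots,a_0)+(-1)^{n+1}\phi(a_n,\dots,a_1)a_0$.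 Horizontal differential $d_{\mathrm{simp}}=\sum_{i=0}^{p+1}(-1)^id_i\colon\mathbf{C}^{p,q}\to\mathbf{C}^{p+1,q}$ where, for $\sigma\in\mathcal{N}_{p+1}(\mathcal{U})$, $(d_0\phi)^\sigma=f^{u_1}\circ\phi^{\partial_0\sigma}$, $(d_i\phi)^\sigma=\phi^{\partial_i\sigma}$ for $1\le i\le p$, and $(d_{p+1}\phi)^\sigma=\phi^{\partial_{p+1}\sigma}\circ(f^{u_{p+1}})^{\otimes q}$. The total complex $\mathbf{C}^n_{\mathrm{GS}}(\mathcal{A})=\bigoplus_{p+q=n}\mathbf{C}^{p,q}(\mathcal{A})$ has differential $d_{\mathrm{GS}}=(-1)^{n+1}d_{\mathrm{simp}}+d_{\mathrm{Hoch}}$ on degree $n$. A cochain $\phi=(\phi^\sigma)$ is normalized if each $\phi^\sigma$ vanishes whenever one argument equals $1$, and reduced if $\phi^\sigma=0$ for degenerate $\sigma$ ($p=0$ cochains are reduced). $\bar{\mathbf{C}}'_{\mathrm{GS}}(\mathcal{A})$ is the subcomplex of normalized reduced cochains; $\mathbf{C}_{\mathrm{tGS}}$ (resp. $\bar{\mathbf{C}}'_{\mathrm{tGS}}$) is the subcomplex with $q\ge1$ (the truncated complex). $HH^n(\mathcal{A})$ denotes the GS Hochschild cohomology $H^n\mathbf{C}_{\mathrm{GS}}(\mathcal{A})$. A twisted presheaf of algebras (with trivial unit twist) $(\mathcal{A},m,f,c)$: algebras $\mathcal{A}(U)$, algebra maps $f^u=u^*$ with $f^{1_U}=1$, invertible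 $c^{u,v}\in\mathcal{A}(W)$ for $v\colon W\to V$, $u\colon V\to U$ with $c^{u,v}v^*u^*(a)=(uv)^*(a)c^{u,v}$, $c^{u,vw}c^{v,w}=c^{uv,w}w^*(c^{u,v})$, $c^{u,1_V}=1=c^{1_U,u}$. A morphism $(g,\tau)\colon\mathcal{A}\to\mathcal{A}'$: unital algebra maps $g^U$ and invertible $\tau^u\in\mathcal{A}'(V)$ with $g^V(u^*a)\tau^u=\tau^u u'^*(g^U a)$, $\tau^{uv}c'^{u,v}=g^W(c^{u,v})\tau^v v'^*(\tau^u)$, $\tau^{1_U}=1$; it is an isomorphism iff all $g^U$ are. A first order twisted deformation of a presheaf $\mathcal{A}$ is a twisted presheaf of $k[\epsilon]$-algebras of the form $(\mathcal{A}[\epsilon],m+m_1\epsilon,f+f_1\epsilon,1+c_1\epsilon)$ (structure maps extended $k[\epsilon]$-(bi)linearly), $(m_1,f_1,c_1)\in\mathbf{C}^{0,2}\oplus\mathbf{C}^{1,1}\oplus\mathbf{C}^{2,0}$, such that each $(\mathcal{A}(U)[\epsilon],m^U+m_1^U\epsilon)$ is a $k[\epsilon]$-algebra with the same unit as $\mathcal{A}(U)$. It is a presheaf deformation if $c_1=0$. An equivalence of twisted deformations is an isomorphism $(g,\tau)=(1+g_1\epsilon,1+\tau_1\epsilon)$ with $(g_1,\tau_1)\in\mathbf{C}^{0,1}\oplus\mathbf{C}^{1,0}$; an equivalence of presheaf deformations is an isomorphism of presheaves $1+g_1\epsilon$, $g_1\in\mathbf{C}^{0,1}$. $\mathrm{Def}_{\mathrm{tw}}(\mathcal{A})$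 and $\mathrm{Def}_{\mathrm{pr}}(\mathcal{A})$ are the sets of equivalence classes. *)

From HB Require Import structures.
From mathcomp Require Import all_boot all_order all_algebra.

Set Implicit Arguments.
Unset Strict Implicit.
Unset Printing Implicit Defensive.

Import GRing.Theory.
Local Open Scope ring_scope.

(* [mcomp v u] is the composite "v after u" (written v u in the paper).        *)
Record smallcat := SmallCat {
  Ob : Type;
  Mor : Ob -> Ob -> Type;
  idmor : forall X, Mor X X;
  mcomp : forall X Y Z, Mor Y Z -> Mor X Y -> Mor X Z;
  comp1m : forall X Y (u : Mor X Y), mcomp (idmor Y) u = u;
  compm1 : forall X Y (u : Mor X Y), mcomp u (idmor X) = u;
  compA : forall X Y Z T (w : Mor Z T) (v : Mor Y Z) (u : Mor X Y),
      mcomp w (mcomp v u) = mcomp (mcomp w v) u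
}.
Arguments Mor : clear implicits.
Arguments idmor {C} X : rename.
Arguments mcomp {C X Y Z} : rename.

(* Presheaves of (unital associative) k-algebras: [res u = u^* = f^u] for     *)
(* u : V -> U is a unital k-algebra map A(U) -> A(V).                          *)
Record presheaf (k : comPzRingType) (C : smallcat) := Presheaf {
  alg : Ob C -> algType k;
  res : forall V U, Mor C V U -> {lrmorphism alg U -> alg V};
  res_id : forall U (a : alg U), res (idmor U) a = a;
  res_comp : forall W V U (u : Mor C V U) (v : Mor C W V) (a : alg U),
      res (mcomp u v) a = res v (res u a)
}.
Arguments res {k C} p {V U} : rename.

(* The nerve.  [chain C p U0 Up] is the type of p-simplices                   *)
(*   U0 -u1-> U1 -> ... -up-> Up ;  d sigma = U0, c sigma = Up.               *)
Unset Implicit Arguments.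
Inductive chain (C : smallcat) : nat -> Ob C -> Ob C -> Type :=
| cnil : forall U, chain C 0 U U
| ccons : forall n U V W, Mor C U V -> chain C n V W -> chain C n.+1 U W.
Set Implicit Arguments.
Arguments chain : clear implicits.
Arguments cnil {C} U.
Arguments ccons {C n U V W}.

(* f^sigma is restriction along the composite u_p ... u_1 *)
Fixpoint compo (C : smallcat) n U W (s : chain C n U W) : Mor C U W :=
  match s with
  | cnil U => idmor U
  | ccons _ _ _ _ u s' => mcomp (compo s') u
  end.

Inductive is_idm (C : smallcat) : forall X Y, Mor C X Y -> Prop :=
| is_idm_intro : forall X, is_idm (idmor X).

Fixpoint degenerate (C : smallcat) n U W (s : chain C n U W) : Prop :=
  match s with
  | cnil _ => False
  | ccons _ _ _ _ u s' => is_idm u \/ degenerate s'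
  end.

(* face d_0 is built into [d0] below.
   [mergeAt j s] = the face d_{j+1} s (composing the arrows u_{j+1}, u_{j+2}),
   defined when 0 <= j and j+2 <= length; None otherwise. *)
Fixpoint mergeAt (C : smallcat) (j : nat) n U W (s : chain C n U W)
  : option (chain C n.-1 U W) :=
  match s in chain _ n U W return option (chain C n.-1 U W) with
  | cnil _ => None
  | ccons n U V W u s' =>
    match j with
    | 0 =>
      (match s' in chain _ n' V' W' return Mor C U V' -> option (chain C n' U W') with
       | cnil _ => fun _ => None
       | ccons _ _ X _ v s'' => fun u => Some (ccons (mcomp v u) s'')
       end) u
    | j'.+1 =>
      (match n return option (chain C n.-1 V W) -> option (chain C n U W) with
       | 0 => fun _ => None
       | n'.+1 => fun o => omap (ccons u) o
       end) (mergeAt j' s')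
    end
  end.

(* [splitlast s] = (d_{n} s, u_n) for an n-simplex s with n >= 1 *)
Fixpoint splitlast (C : smallcat) n U W (s : chain C n U W)
  : option {X : Ob C & (chain C n.-1 U X * Mor C X W)%type} :=
  match s in chain _ n U W
        return option {X : Ob C & (chain C n.-1 U X * Mor C X W)%type} with
  | cnil _ => None
  | ccons n U V W u s' =>
    (match n return chain C n V W ->
            option {X : Ob C & (chain C n.-1 V X * Mor C X W)%type} ->
            option {X : Ob C & (chain C n U X * Mor C X W)%type} with
     | 0 => fun s' _ => Some (existT _ U (cnil U, mcomp (compo s') u))
     | n'.+1 => fun _ o =>
         omap (fun t => let: existT X (r, w) := t in existT _ X (ccons u r, w)) o
     end) s' (splitlast s')
  end.

Section GS.
Context {k : comPzRingType} {C : smallcat} (A : presheaf k C).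

Local Notation Alg := (alg A).

(* Cochains.  A (raw) element of C^{p,q}: for each p-simplex sigma : U ~> W   *)
(* a q-ary map A(W)^q -> A(U) (arguments listed left to right: x 0 = a_{q-1}, *)
(* ..., x (q-1) = a_0 in the paper's notation phi(a_{q-1},...,a_0)).          *)
(* Membership in C^{p,q} = k-multilinearity (Hom_k(A^{(x)q}, A)).             *)
Definition Cpq (p q : nat) : Type :=
  forall U W, chain C p U W -> ('I_q -> Alg W) -> Alg U.

Definition upd {T : Type} {q} (x : 'I_q -> T) (j : 'I_q) (y : T) : 'I_q -> T :=
  fun i => if i == j then y else x i.

Definition multilinear {q} {V W : lmodType k} (phi : ('I_q -> V) -> W) : Prop :=
  forall (x : 'I_q -> V) (j : 'I_q) (a : k) (y z : V),
    phi (upd x j (a *: y + z)) = a *: phi (upd x j y) + phi (upd x j z).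

Definition inC p q (phi : Cpq p q) : Prop :=
  forall U W (s : chain C p U W), multilinear (phi U W s).

Definition normalized p q (phi : Cpq p q) : Prop :=
  forall U W (s : chain C p U W) (x : 'I_q -> Alg W) (j : 'I_q),
    x j = 1 -> phi U W s x = 0.

Definition reduced p q (phi : Cpq p q) : Prop :=
  forall U W (s : chain C p U W) (x : 'I_q -> Alg W),
    degenerate s -> phi U W s x = 0.

Definition inCbar p q (phi : Cpq p q) : Prop :=
  [/\ inC phi, normalized phi & reduced phi].

Definition zeroC p q : Cpq p q := fun U W s x => 0.
Arguments zeroC p q : clear implicits.
Definition addC p q (phi psi : Cpq p q) : Cpq p q :=
  fun U W s x => phi U W s x + psi U W s x.
Definition oppC p q (phi : Cpq p q) : Cpq p q := fun U W s x => - phi U W s x.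
Definition subC p q (phi psi : Cpq p q) : Cpq p q := addC phi (oppC psi).
Definition scC p q (a : k) (phi : Cpq p q) : Cpq p q :=
  fun U W s x => a *: phi U W s x.
Definition eqC p q (phi psi : Cpq p q) : Prop :=
  forall U W (s : chain C p U W) x, phi U W s x = psi U W s x.

(* Hochschild differential (componentwise), A(dsigma) an A(csigma)-bimodule   *)
(* via f^sigma.                                                               *)
Definition tailx {T : Type} {q} (x : 'I_q.+1 -> T) : 'I_q -> T :=
  fun i => x (lift ord0 i).
Definition initx {T : Type} {q} (x : 'I_q.+1 -> T) : 'I_q -> T :=
  fun i => x (widen_ord (leqnSn q) i).
Definition mergex {R : pzRingType} {q} (x : 'I_q.+1 -> R) (i : nat) : 'I_q -> R :=
  fun j => if (j < i)%N then x (widen_ord (leqnSn q) j)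
           else if (j == i :> nat) then x (widen_ord (leqnSn q) j) * x (lift ord0 j)
           else x (lift ord0 j).

Definition dH p q (phi : Cpq p q) : Cpq p q.+1 :=
  fun U W s x =>
    res A (compo s) (x ord0) * phi U W s (tailx x)
    + \sum_(i < q) (-1) ^+ i.+1 *: phi U W s (mergex x i)
    + (-1) ^+ q.+1 *: (phi U W s (initx x) * res A (compo s) (x ord_max)).

Definition d0 p q (phi : Cpq p q) : Cpq p.+1 q :=
  fun U W s x =>
    (match s in chain _ n U' W' return Cpq n.-1 q -> ('I_q -> Alg W') -> Alg U' with
     | cnil _ => fun _ _ => 0
     | ccons n U V W u s' => fun phi x => res A u (phi V W s' x)
     end) phi x.

Definition dmid p q (i : nat) (phi : Cpq p q) : Cpq p.+1 q :=
  fun U W s x =>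
    match mergeAt i.-1 s with
    | Some t => phi U W t x
    | None => 0
    end.

Definition dlast p q (phi : Cpq p q) : Cpq p.+1 q :=
  fun U W s x =>
    match splitlast s with
    | Some (existT X (t, u)) => phi U X t (fun j => res A u (x j))
    | None => 0
    end.

Definition dS p q (phi : Cpq p q) : Cpq p.+1 q :=
  fun U W s x =>
    d0 phi s x
    + \sum_(1 <= i < p.+1) (-1) ^+ i *: dmid i phi s x
    + (-1) ^+ p.+1 *: dlast phi s x.

(*   d_GS = (-1)^{n+1} d_simp + d_Hoch on degree n.                           *)
Definition sgn (n : nat) : k := (-1) ^+ n.+1.

Definition C1 : Type := (Cpq 0 1 * Cpq 1 0)%type.
Definition C2 : Type := (Cpq 0 2 * Cpq 1 1 * Cpq 2 0)%type.
Definition C3 : Type := (Cpq 0 3 * Cpq 1 2 * Cpq 2 1 * Cpq 3 0)%type.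

Definition dGS1 (y : C1) : C2 :=
  let: (g, t) := y in
  (dH g, addC (scC (sgn 1) (dS g)) (dH t), scC (sgn 1) (dS t)).

Definition dGS2 (x : C2) : C3 :=
  let: (m, f, c) := x in
  (dH m, addC (scC (sgn 2) (dS m)) (dH f), addC (scC (sgn 2) (dS f)) (dH c),
   scC (sgn 2) (dS c)).

Definition inC1 (y : C1) : Prop := inC y.1 /\ inC y.2.
Definition inC2 (x : C2) : Prop := [/\ inC x.1.1, inC x.1.2 & inC x.2].
Definition inCbar1 (y : C1) : Prop := inCbar y.1 /\ inCbar y.2.
Definition inCbar2 (x : C2) : Prop := [/\ inCbar x.1.1, inCbar x.1.2 & inCbar x.2].

Definition eqC2 (x x' : C2) : Prop :=
  [/\ eqC x.1.1 x'.1.1, eqC x.1.2 x'.1.2 & eqC x.2 x'.2].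
Definition subC2 (x x' : C2) : C2 :=
  (subC x.1.1 x'.1.1, subC x.1.2 x'.1.2, subC x.2 x'.2).
Definition zero3 (z : C3) : Prop :=
  [/\ eqC z.1.1.1 (zeroC _ _), eqC z.1.1.2 (zeroC _ _),
      eqC z.1.2 (zeroC _ _) & eqC z.2 (zeroC _ _)].

Definition Z2bar (x : C2) : Prop := inCbar2 x /\ zero3 (dGS2 x).
(* truncated complex bar C'_tGS: cochains with q >= 1, i.e. zero (q=0) part *)
Definition trunc2 (m : Cpq 0 2) (f : Cpq 1 1) : C2 := (m, f, zeroC 2 0).
Definition trunc1 (g : Cpq 0 1) : C1 := (g, zeroC 1 0).
Definition Z2tbar (m : Cpq 0 2) (f : Cpq 1 1) : Prop :=
  [/\ inCbar m, inCbar f & zero3 (dGS2 (trunc2 m f))].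

Definition cohom_full (x x' : C2) : Prop :=
  exists y : C1, inC1 y /\ eqC2 (dGS1 y) (subC2 x x').
Definition cohom_bar (x x' : C2) : Prop :=
  exists y : C1, inCbar1 y /\ eqC2 (dGS1 y) (subC2 x x').
Definition cohom_tbar (m : Cpq 0 2) (f : Cpq 1 1) (m' : Cpq 0 2) (f' : Cpq 1 1)
  : Prop :=
  exists g : Cpq 0 1, inCbar g /\
    eqC2 (dGS1 (trunc1 g)) (subC2 (trunc2 m f) (trunc2 m' f')).

(* First order deformations.  A(U)[eps] = A(U) + A(U) eps is represented by   *)
(* pairs (a, b) = a + b eps; structure maps are the k[eps]-(bi)linear         *)
(* extensions of m + m1 eps, f + f1 eps, 1 + c1 eps.                           *)
Definition Deps (U : Ob C) : Type := (Alg U * Alg U)%type.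
Definition oneD U : Deps U := (1, 0).

Definition x1 {T : Type} (a : T) : 'I_1 -> T := fun _ => a.
Definition x2 {T : Type} (a b : T) : 'I_2 -> T :=
  fun i => if (i == 0 :> nat) then a else b.
Definition x0 {U} : 'I_0 -> Alg U := fun _ => 0.

Definition s0 (U : Ob C) : chain C 0 U U := cnil U.
Definition s1 V U (u : Mor C V U) : chain C 1 V U := ccons u (cnil U).
Definition s2 W V U (u : Mor C V U) (v : Mor C W V) : chain C 2 W U :=
  ccons v (ccons u (cnil U)).

Definition mbar (m1 : Cpq 0 2) U (x y : Deps U) : Deps U :=
  (x.1 * y.1, x.1 * y.2 + x.2 * y.1 + m1 U U (s0 U) (x2 x.1 y.1)).
Definition fbar (f1 : Cpq 1 1) V U (u : Mor C V U) (x : Deps U) : Deps V :=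
  (res A u x.1, res A u x.2 + f1 V U (s1 u) (x1 x.1)).
Definition cbar (c1 : Cpq 2 0) W V U (u : Mor C V U) (v : Mor C W V) : Deps W :=
  (1, c1 W U (s2 u v) x0).

Definition invertible (m1 : Cpq 0 2) U (x : Deps U) : Prop :=
  exists y, mbar m1 x y = oneD U /\ mbar m1 y x = oneD U.

(* (A[eps], m + m1 eps, f + f1 eps, 1 + c1 eps) is a twisted presheaf of
   k[eps]-algebras (with trivial unit twist), each A(U)[eps] having unit 1 *)
Definition is_twisted_def (x : C2) : Prop :=
  let: (m1, f1, c1) := x in
      (forall U (a b c : Deps U),
          mbar m1 (mbar m1 a b) c = mbar m1 a (mbar m1 b c)) /\
      (forall U (a : Deps U), mbar m1 (oneD U) a = a /\ mbar m1 a (oneD U) = a) /\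
      (forall V U (u : Mor C V U) (a b : Deps U),
          fbar f1 u (mbar m1 a b) = mbar m1 (fbar f1 u a) (fbar f1 u b)) /\
      (forall V U (u : Mor C V U), fbar f1 u (oneD U) = oneD V) /\
      (forall U (a : Deps U), fbar f1 (idmor U) a = a) /\
      (forall W V U (u : Mor C V U) (v : Mor C W V), invertible m1 (cbar c1 u v)) /\
      (forall W V U (u : Mor C V U) (v : Mor C W V) (a : Deps U),
          mbar m1 (cbar c1 u v) (fbar f1 v (fbar f1 u a))
          = mbar m1 (fbar f1 (mcomp u v) a) (cbar c1 u v)) /\
      (forall X W V U (u : Mor C V U) (v : Mor C W V) (w : Mor C X W),
          mbar m1 (cbar c1 u (mcomp v w)) (cbar c1 v w)
          = mbar m1 (cbar c1 (mcomp u v) w) (fbar f1 w (cbar c1 u v))) /\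
      (forall V U (u : Mor C V U),
          cbar c1 u (idmor V) = oneD V /\ cbar c1 (idmor U) u = oneD V).

Definition is_presheaf_def (m1 : Cpq 0 2) (f1 : Cpq 1 1) : Prop :=
  is_twisted_def (trunc2 m1 f1).

Definition gbar (g1 : Cpq 0 1) U (x : Deps U) : Deps U :=
  (x.1, x.2 + g1 U U (s0 U) (x1 x.1)).
Definition taubar (t1 : Cpq 1 0) V U (u : Mor C V U) : Deps V :=
  (1, t1 V U (s1 u) x0).

Definition is_twisted_iso (x x' : C2) (g1 : Cpq 0 1) (t1 : Cpq 1 0) : Prop :=
  let: (m1, f1, c1) := x in
  let: (m1', f1', c1') := x' in
      (forall U, gbar g1 (oneD U) = oneD U) /\
      (forall U (a b : Deps U),
          gbar g1 (mbar m1 a b) = mbar m1' (gbar g1 a) (gbar g1 b)) /\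
      (forall V U (u : Mor C V U), invertible m1' (taubar t1 u)) /\
      (forall V U (u : Mor C V U) (a : Deps U),
          mbar m1' (gbar g1 (fbar f1 u a)) (taubar t1 u)
          = mbar m1' (taubar t1 u) (fbar f1' u (gbar g1 a))) /\
      (forall W V U (u : Mor C V U) (v : Mor C W V),
          mbar m1' (taubar t1 (mcomp u v)) (cbar c1' u v)
          = mbar m1' (mbar m1' (gbar g1 (cbar c1 u v)) (taubar t1 v))
                     (fbar f1' v (taubar t1 u))) /\
      (forall U, taubar t1 (idmor U) = oneD U) /\
      (forall U, bijective (@gbar g1 U)).

Definition is_presheaf_iso (m1 : Cpq 0 2) (f1 : Cpq 1 1)
    (m1' : Cpq 0 2) (f1' : Cpq 1 1) (g1 : Cpq 0 1) : Prop :=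
  [/\ (forall U, gbar g1 (oneD U) = oneD U),
      (forall U (a b : Deps U),
          gbar g1 (mbar m1 a b) = mbar m1' (gbar g1 a) (gbar g1 b)),
      (forall V U (u : Mor C V U) (a : Deps U),
          gbar g1 (fbar f1 u a) = fbar f1' u (gbar g1 a)) &
      (forall U, bijective (@gbar g1 U))].

Definition equiv_tw (x x' : C2) : Prop :=
  exists (g1 : Cpq 0 1) (t1 : Cpq 1 0), inC g1 /\ inC t1 /\ is_twisted_iso x x' g1 t1.
Definition equiv_pr (m1 : Cpq 0 2) (f1 : Cpq 1 1) (m1' : Cpq 0 2) (f1' : Cpq 1 1)
  : Prop :=
  exists g1 : Cpq 0 1, inC g1 /\ is_presheaf_iso m1 f1 m1' f1' g1.

End GS.

From Pilot Require Import Defs.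
From HB Require Import structures.
From mathcomp Require Import all_boot all_order all_algebra.
From Stdlib Require Import FunctionalExtensionality.
Import GRing.Theory.
Local Open Scope ring_scope.

(* The eps-coefficients of the
   axioms of a twisted presheaf (A[eps], m + m1 eps, f + f1 eps, 1 + c1 eps)
   are, one by one, the components of d_GS (m1, f1, c1) = 0: associativity
   gives the Hochschild cocycle condition on m1, multiplicativity of the
   restrictions the (1,2)-component, the twisting rule the (2,1)-component and
   the cocycle identity of the twists the (3,0)-component; the unit axioms and
   c^{u,1} = 1 = c^{1,u} say exactly that (m1, f1, c1) is normalized and
   reduced, and 1 + c1 eps is always invertible, with inverse 1 - c1 eps.  In
   the same way the eps-coefficients of the axioms of an equivalence
   (1 + g1 eps, 1 + t1 eps) say d_GS (g1, -t1) = x - x'.  Finally, any GS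
   2-cocycle (m1, f1, c1) becomes normalized and reduced after subtracting the
   coboundary of (m1(1, -), c1^{1,1}); this is why normalized reduced
   cohomology computes HH^2. *)

Inductive zexpr := ZAtom of nat | ZZero | ZAdd of zexpr & zexpr | ZOpp of zexpr.

Fixpoint zexpr_bound (e : zexpr) : nat :=
  match e with
  | ZAtom n => n.+1
  | ZZero => 0
  | ZAdd a b => maxn (zexpr_bound a) (zexpr_bound b)
  | ZOpp a => zexpr_bound a
  end.

Fixpoint zexpr_coef (e : zexpr) (i : nat) : int :=
  match e with
  | ZAtom n => if n == i then 1 else 0
  | ZZero => 0
  | ZAdd a b => zexpr_coef a i + zexpr_coef b i
  | ZOpp a => - zexpr_coef a i
  end.

Section ZmoduleNormalForm.
Variable V : zmodType.

Fixpoint zexpr_eval (env : seq V) (e : zexpr) : V :=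
  match e with
  | ZAtom n => nth 0 env n
  | ZZero => 0
  | ZAdd a b => zexpr_eval env a + zexpr_eval env b
  | ZOpp a => - zexpr_eval env a
  end.

Lemma zexpr_evalE env e N : (zexpr_bound e <= N)%N ->
  zexpr_eval env e = \sum_(i < N) nth 0 env i *~ zexpr_coef e i.
Proof.
elim: e => [n||a IHa b IHb|a IHa] /= hN.
- rewrite (bigD1 (Ordinal hN)) //= eqxx mulr1z big1 ?addr0 // => i /negbTE.
  by rewrite -(inj_eq val_inj) /= eq_sym => ->.
- by rewrite big1 // => i _; rewrite mulr0z.
- rewrite geq_max in hN; case/andP: hN => ha hb.
  by rewrite IHa // IHb // -big_split /=; apply: eq_bigr => i _; rewrite mulrzDr.
- by rewrite IHa // -sumrN; apply: eq_bigr => i _; rewrite mulrNz.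
Qed.

Lemma zexpr_eval_eq env e1 e2 :
  let N := maxn (zexpr_bound e1) (zexpr_bound e2) in
  all (fun i => zexpr_coef e1 i == zexpr_coef e2 i) (iota 0 N) ->
  zexpr_eval env e1 = zexpr_eval env e2.
Proof.
move=> N /allP same_coef.
rewrite (@zexpr_evalE env e1 N) ?leq_maxl // (@zexpr_evalE env e2 N) ?leq_maxr //.
apply: eq_bigr => i _.
by have := same_coef i; rewrite mem_iota add0n ltn_ord => /(_ isT)/eqP->.
Qed.

End ZmoduleNormalForm.

(* [abel] proves an equation between sums and opposites in a zmodType by
   reflection into [zexpr]: every other subterm (products, restrictions,
   cochain values) is treated as an atom, atoms being compared up to
   unification. *)
Ltac same_term x y :=
  constr:((ltac:(tryif unify x y then exact true else exact false)) : bool).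

Ltac mem_term x l :=
  lazymatch l with
  | nil => constr:(false)
  | ?y :: ?l' => let b := same_term x y in
      lazymatch b with true => constr:(true) | false => mem_term x l' end
  end.

Ltac zexpr_atoms t l :=
  lazymatch t with
  | (?a + ?b)%R => let l' := zexpr_atoms a l in zexpr_atoms b l'
  | (- ?a)%R => zexpr_atoms a l
  | 0%R => l
  | _ => let b := mem_term t l in
         lazymatch b with true => l | false => constr:(t :: l) end
  end.

Ltac index_term t l :=
  lazymatch l with
  | ?y :: ?l' => let b := same_term t y in
      lazymatch b with
      | true => constr:(0%N)
      | false => let n := index_term t l' in constr:(n.+1)
      end
  end.

Ltac reify_zexpr t l :=
  lazymatch t with
  | (?a + ?b)%R =>
      let x := reify_zexpr a l in let y := reify_zexpr b l in constr:(ZAdd x y)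
  | (- ?a)%R => let x := reify_zexpr a l in constr:(ZOpp x)
  | 0%R => constr:(ZZero)
  | _ => let n := index_term t l in constr:(ZAtom n)
  end.

Ltac abel :=
  lazymatch goal with |- @eq ?T ?L ?R =>
    let l0 := constr:(@nil T) in
    let l1 := zexpr_atoms L l0 in let l := zexpr_atoms R l1 in
    let e1 := reify_zexpr L l in let e2 := reify_zexpr R l in
    first [ change (@zexpr_eval _ l e1 = @zexpr_eval _ l e2)
          | lazymatch T with
            | GRing.Algebra.sort ?X => change (@zexpr_eval X l e1 = @zexpr_eval X l e2)
            end ];
    apply: zexpr_eval_eq; reflexivity
  end.

Lemma eq_of_subr_eq {V : zmodType} {x y l r : V} : x = y -> l - r = x - y -> l = r.
Proof. by move=> ->; rewrite subrr => /eqP; rewrite subr_eq0 => /eqP. Qed.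

Lemma eq_of_subr_eqN {V : zmodType} {x y l r : V} : x = y -> l - r = y - x -> l = r.
Proof. by move=> ->; rewrite subrr => /eqP; rewrite subr_eq0 => /eqP. Qed.

(* [abel_from h] proves [l = r] when [l - r] and [x - y] (or [y - x]) agree as
   formal sums, given [h : x = y]. *)
Ltac abel_from h :=
  rewrite ?rmorphN ?mulrN ?mulNr ?opprK;
  rewrite ?rmorphN ?mulrN ?mulNr ?opprK in h;
  first [ apply: (eq_of_subr_eq h); abel | apply: (eq_of_subr_eqN h); abel ].

Set Implicit Arguments.
Unset Strict Implicit.
Unset Printing Implicit Defensive.

Section FirstOrderDeformations.
Context {k : comPzRingType} {C : smallcat} (A : presheaf k C).
Local Notation Alg := (alg A).

Definition x3 {T : Type} (a b c : T) : 'I_3 -> T :=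
  fun i => if (i == 0 :> nat) then a else if (i == 1 :> nat) then b else c.

Lemma args0E U (x : 'I_0 -> Alg U) : x = x0 A.
Proof. by apply: functional_extensionality => -[]. Qed.

Lemma args1E T (x : 'I_1 -> T) : x = x1 (x ord0).
Proof.
apply: functional_extensionality => -[[|] // ?].
by rewrite /x1; congr x; apply: val_inj.
Qed.

Lemma args2E T (x : 'I_2 -> T) : x = x2 (x ord0) (x ord_max).
Proof.
apply: functional_extensionality => -[[|[|]] // ?];
  by rewrite /x2 /=; congr x; apply: val_inj.
Qed.

Lemma args3E T (x : 'I_3 -> T) : x = x3 (x ord0) (x (inord 1)) (x ord_max).
Proof.
apply: functional_extensionality => -[[|[|[|]]] // ?]; rewrite /x3 /=.
all: by congr x; apply: val_inj; rewrite /= ?inordK.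
Qed.

Lemma tailx3 T (a b c : T) : tailx (x3 a b c) = x2 b c.
Proof. by apply: functional_extensionality => -[[|[|]] //= ?]. Qed.
Lemma initx3 T (a b c : T) : initx (x3 a b c) = x2 a b.
Proof. by apply: functional_extensionality => -[[|[|]] //= ?]. Qed.
Lemma mergex3_0 U (a b c : Alg U) : mergex (x3 a b c) 0 = x2 (a * b) c.
Proof. by apply: functional_extensionality => -[[|[|]] //= ?]. Qed.
Lemma mergex3_1 U (a b c : Alg U) : mergex (x3 a b c) 1 = x2 a (b * c).
Proof. by apply: functional_extensionality => -[[|[|]] //= ?]. Qed.
Lemma tailx2 T (a b : T) : tailx (x2 a b) = x1 b.
Proof. by apply: functional_extensionality => -[[|] //= ?]. Qed.
Lemma initx2 T (a b : T) : initx (x2 a b) = x1 a.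
Proof. by apply: functional_extensionality => -[[|] //= ?]. Qed.
Lemma mergex2_0 U (a b : Alg U) : mergex (x2 a b) 0 = x1 (a * b).
Proof. by apply: functional_extensionality => -[[|] //= ?]. Qed.
Lemma tailx1 U (a : Alg U) : tailx (x1 a) = x0 A.
Proof. exact: args0E. Qed.
Lemma initx1 U (a : Alg U) : initx (x1 a) = x0 A.
Proof. exact: args0E. Qed.

Lemma res_x2 V U (u : Mor C V U) (a b : Alg U) :
  (fun j => res A u (x2 a b j)) = x2 (res A u a) (res A u b).
Proof. by apply: functional_extensionality => -[[|] //= ?]. Qed.
Lemma res_x1 V U (u : Mor C V U) (a : Alg U) :
  (fun j => res A u (x1 a j)) = x1 (res A u a).
Proof. by apply: functional_extensionality => -[[|] //= ?]. Qed.
Lemma res_x0 V U (u : Mor C V U) : (fun j => res A u (x0 A j)) = x0 A.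
Proof. exact: args0E. Qed.

Lemma scale_sign n U (y : Alg U) : (-1) ^+ n *: y = if odd n then - y else y.
Proof.
by rewrite -signr_odd; case: (odd n); rewrite ?expr1 ?expr0 ?scaleN1r ?scale1r.
Qed.

Ltac args_simpl :=
  rewrite ?tailx3 ?initx3 ?mergex3_0 ?mergex3_1 ?tailx2 ?initx2 ?mergex2_0
    ?tailx1 ?initx1 ?res_x2 ?res_x1 ?res_x0 ?scale_sign /=.

Lemma chain0_ind (P : forall U W, chain C 0 U W -> Prop) :
  (forall U, P U U (cnil U)) -> forall U W s, P U W s.
Proof.
move=> H U W s.
have: forall n U W (s : chain C n U W),
  (match n as n' return chain C n' U W -> Prop with
   | 0 => fun s => P U W s | _ => fun _ => True end) s.
  by move=> n U' W' []; [|move=> *].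
by move/(_ 0 U W s).
Qed.

Lemma chain1_ind (P : forall U W, chain C 1 U W -> Prop) :
  (forall V U (u : Mor C V U), P V U (s1 u)) -> forall U W s, P U W s.
Proof.
move=> H U W s.
have: forall n U W (s : chain C n U W),
  (match n as n' return chain C n' U W -> Prop with
   | 1 => fun s => P U W s | _ => fun _ => True end) s.
  move=> n U' W' [] // [] // X Y Z u s'.
  by move: u; elim/chain0_ind: s' => V u; apply: H.
by move/(_ 1%N U W s).
Qed.

Lemma chain2_ind (P : forall U W, chain C 2 U W -> Prop) :
  (forall W V U (u : Mor C V U) (v : Mor C W V), P W U (s2 u v)) ->
  forall U W s, P U W s.
Proof.
move=> H U W s.
have: forall n U W (s : chain C n U W),
  (match n as n' return chain C n' U W -> Prop with
   | 2 => fun s => P U W s | _ => fun _ => True end) s.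
  move=> n U' W' [] // [] // [] // X Y Z v s'.
  by move: v; elim/chain1_ind: s' => V' U'' u v; apply: H.
by move/(_ 2%N U W s).
Qed.

Definition s3 X W V U (u : Mor C V U) (v : Mor C W V) (w : Mor C X W) :
  chain C 3 X U := ccons w (ccons v (ccons u (cnil U))).

Lemma chain3_ind (P : forall U W, chain C 3 U W -> Prop) :
  (forall X W V U (u : Mor C V U) (v : Mor C W V) (w : Mor C X W),
      P X U (s3 u v w)) ->
  forall U W s, P U W s.
Proof.
move=> H U W s.
have: forall n U W (s : chain C n U W),
  (match n as n' return chain C n' U W -> Prop with
   | 3 => fun s => P U W s | _ => fun _ => True end) s.
  move=> n U' W' [] // [] // [] // [] // X Y Z w s'.
  by move: w; elim/chain2_ind: s' => W1 V1 U1 u v w; apply: H.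
by move/(_ 3%N U W s).
Qed.

Definition Mv (m : Cpq A 0 2) U (a b : Alg U) := m U U (s0 U) (x2 a b).
Definition Gv (g : Cpq A 0 1) U (a : Alg U) := g U U (s0 U) (x1 a).
Definition Fv (f : Cpq A 1 1) V U (u : Mor C V U) (a : Alg U) := f V U (s1 u) (x1 a).
Definition Tv (t : Cpq A 1 0) V U (u : Mor C V U) := t V U (s1 u) (x0 A).
Definition Cv (c : Cpq A 2 0) W V U (u : Mor C V U) (v : Mor C W V) :=
  c W U (s2 u v) (x0 A).

Lemma dH_02 (m : Cpq A 0 2) U (a b c : Alg U) :
  dH m (s0 U) (x3 a b c) =
  a * Mv m b c - Mv m (a * b) c + Mv m a (b * c) - Mv m a b * c.
Proof.
rewrite /dH !big_ord_recr big_ord0 /= res_id add0r; args_simpl.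
by rewrite /x3 /= res_id /Mv; abel.
Qed.

Lemma dH_01 (g : Cpq A 0 1) U (a b : Alg U) :
  dH g (s0 U) (x2 a b) = a * Gv g b - Gv g (a * b) + Gv g a * b.
Proof.
rewrite /dH !big_ord_recr big_ord0 /= add0r; args_simpl.
by rewrite /x2 /= !res_id /Gv.
Qed.

Lemma dH_11 (f : Cpq A 1 1) V U (u : Mor C V U) (a b : Alg U) :
  dH f (s1 u) (x2 a b) =
  res A u a * Fv f u b - Fv f u (a * b) + Fv f u a * res A u b.
Proof.
rewrite /dH !big_ord_recr big_ord0 /= add0r; args_simpl.
by rewrite /x2 /= comp1m /Fv.
Qed.

Lemma dH_20 (c : Cpq A 2 0) W V U (u : Mor C V U) (v : Mor C W V) (a : Alg U) :
  dH c (s2 u v) (x1 a) =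
  res A v (res A u a) * Cv c u v - Cv c u v * res A v (res A u a).
Proof.
rewrite /dH big_ord0 /= addr0; args_simpl.
by rewrite /x1 /= comp1m res_comp /Cv.
Qed.

Lemma dH_10 (t : Cpq A 1 0) V U (u : Mor C V U) (a : Alg U) :
  dH t (s1 u) (x1 a) = res A u a * Tv t u - Tv t u * res A u a.
Proof.
rewrite /dH big_ord0 /= addr0; args_simpl.
by rewrite /x1 /= comp1m /Tv.
Qed.

Lemma dS_02 (m : Cpq A 0 2) V U (u : Mor C V U) (a b : Alg U) :
  dS m (s1 u) (x2 a b) = res A u (Mv m a b) - Mv m (res A u a) (res A u b).
Proof. by rewrite /dS big_geq // addr0 /d0 /dlast /= comp1m; args_simpl. Qed.

Lemma dS_01 (g : Cpq A 0 1) V U (u : Mor C V U) (a : Alg U) :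
  dS g (s1 u) (x1 a) = res A u (Gv g a) - Gv g (res A u a).
Proof. by rewrite /dS big_geq // addr0 /d0 /dlast /= comp1m; args_simpl. Qed.

Lemma dS_11 (f : Cpq A 1 1) W V U (u : Mor C V U) (v : Mor C W V) (a : Alg U) :
  dS f (s2 u v) (x1 a) =
  res A v (Fv f u a) - Fv f (mcomp u v) a + Fv f v (res A u a).
Proof. by rewrite /dS big_nat1 /d0 /dmid /dlast /= comp1m; args_simpl. Qed.

Lemma dS_10 (t : Cpq A 1 0) W V U (u : Mor C V U) (v : Mor C W V) :
  dS t (s2 u v) (x0 A) = res A v (Tv t u) - Tv t (mcomp u v) + Tv t v.
Proof. by rewrite /dS big_nat1 /d0 /dmid /dlast /= comp1m; args_simpl. Qed.

Lemma dS_20 (c : Cpq A 2 0) X W V U (u : Mor C V U) (v : Mor C W V)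
    (w : Mor C X W) :
  dS c (s3 u v w) (x0 A) =
  res A w (Cv c u v) - Cv c u (mcomp v w) + Cv c (mcomp u v) w - Cv c v w.
Proof.
rewrite /dS big_ltn // big_nat1 /d0 /dmid /dlast /= comp1m; args_simpl.
by rewrite /Cv /s2; abel.
Qed.

Definition cocycle_eqs (x : C2 A) : Prop :=
  let: (m, f, c) := x in
  [/\ (forall U (a b e : Alg U),
         a * Mv m b e - Mv m (a * b) e + Mv m a (b * e) - Mv m a b * e = 0),
      (forall V U (u : Mor C V U) (a b : Alg U),
         res A u a * Fv f u b - Fv f u (a * b) + Fv f u a * res A u b
         = res A u (Mv m a b) - Mv m (res A u a) (res A u b)),
      (forall W V U (u : Mor C V U) (v : Mor C W V) (a : Alg U),
         res A v (res A u a) * Cv c u v - Cv c u v * res A v (res A u a)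
         = res A v (Fv f u a) - Fv f (mcomp u v) a + Fv f v (res A u a)) &
      (forall X W V U (u : Mor C V U) (v : Mor C W V) (w : Mor C X W),
         res A w (Cv c u v) - Cv c u (mcomp v w) + Cv c (mcomp u v) w - Cv c v w
         = 0)].

Lemma addNr_eq0 U (x y : Alg U) : - x + y = 0 <-> y = x.
Proof. by split=> [/eqP|->]; rewrite ?addNr // addrC subr_eq0 => /eqP. Qed.

Lemma dGS2_eq0P (x : C2 A) : zero3 (dGS2 x) <-> cocycle_eqs x.
Proof.
case: x => [[m f] c]; rewrite /zero3 /dGS2 /= /Defs.addC /scC /sgn /zeroC; split.
- case=> H1 H2 H3 H4; split.
  + by move=> U a b e; have := H1 U U (s0 U) (x3 a b e); rewrite dH_02.
  + move=> V U u a b; have := H2 V U (s1 u) (x2 a b).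
    by rewrite scale_sign /= dS_02 dH_11 => /addNr_eq0.
  + move=> W V U u v a; have := H3 W U (s2 u v) (x1 a).
    by rewrite scale_sign /= dS_11 dH_20 => /addNr_eq0.
  + move=> X W V U u v w; have := H4 X U (s3 u v w) (x0 A).
    by rewrite scale_sign /= dS_20 => /eqP; rewrite oppr_eq0 => /eqP.
- case=> H1 H2 H3 H4; split.
  + move=> U W s; elim/chain0_ind: s => U0 x.
    by rewrite (args3E x) dH_02; apply: H1.
  + move=> U W s; elim/chain1_ind: s => V U0 u x.
    by rewrite (args2E x) scale_sign /= dS_02 dH_11 H2 addNr.
  + move=> U W s; elim/chain2_ind: s => W0 V U0 u v x.
    by rewrite (args1E x) scale_sign /= dS_11 dH_20 H3 addNr.
  + move=> U W s; elim/chain3_ind: s => X W0 V U0 u v w x.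
    by rewrite (args0E x) scale_sign /= dS_20 H4 oppr0.
Qed.

Definition coboundary_eqs (g : Cpq A 0 1) (t : Cpq A 1 0) (x x' : C2 A) : Prop :=
  let: (m, f, c) := x in
  let: (m', f', c') := x' in
  [/\ (forall U (a b : Alg U),
         a * Gv g b - Gv g (a * b) + Gv g a * b = Mv m a b - Mv m' a b),
      (forall V U (u : Mor C V U) (a : Alg U),
         res A u (Gv g a) - Gv g (res A u a)
           + (res A u a * Tv t u - Tv t u * res A u a)
         = Fv f u a - Fv f' u a) &
      (forall W V U (u : Mor C V U) (v : Mor C W V),
         res A v (Tv t u) - Tv t (mcomp u v) + Tv t v = Cv c u v - Cv c' u v)].

Lemma dGS1_eqP (g : Cpq A 0 1) (t : Cpq A 1 0) (x x' : C2 A) :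
  eqC2 (dGS1 (g, t)) (subC2 x x') <-> coboundary_eqs g t x x'.
Proof.
case: x => [[m f] c]; case: x' => [[m' f'] c'].
rewrite /eqC2 /dGS1 /subC2 /= /subC /Defs.addC /oppC /scC /sgn; split.
- case=> H1 H2 H3; split.
  + by move=> U a b; have := H1 U U (s0 U) (x2 a b); rewrite dH_01.
  + move=> V U u a; have := H2 V U (s1 u) (x1 a).
    by rewrite scale_sign /= dS_01 dH_10.
  + move=> W V U u v; have := H3 W U (s2 u v) (x0 A).
    by rewrite scale_sign /= dS_10.
- case=> H1 H2 H3; split.
  + move=> U W s; elim/chain0_ind: s => U0 x; rewrite (args2E x) dH_01 H1 //.
  + move=> U W s; elim/chain1_ind: s => V U0 u x.
    by rewrite (args1E x) scale_sign /= dS_01 dH_10 H2.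
  + move=> U W s; elim/chain2_ind: s => W0 V U0 u v x.
    by rewrite (args0E x) scale_sign /= dS_10 H3.
Qed.

Lemma normalized_Mv (m : Cpq A 0 2) :
  normalized m <-> forall U (a : Alg U), Mv m 1 a = 0 /\ Mv m a 1 = 0.
Proof.
split.
- move=> H U a; split.
  + exact: (H U U (s0 U) (x2 1 a) ord0).
  + exact: (H U U (s0 U) (x2 a 1) ord_max).
- move=> H U W s; elim/chain0_ind: s => U0 x j hx; rewrite (args2E x).
  case: j hx => -[|[|//]] hj hx.
  + have e : Ordinal hj = ord0 by apply: val_inj.
    by rewrite e in hx; rewrite hx; case: (H U0 (x ord_max)).
  + have e : Ordinal hj = ord_max by apply: val_inj.
    by rewrite e in hx; rewrite hx; case: (H U0 (x ord0)).
Qed.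

Lemma normalized_unary p (phi : Cpq A p 1) :
  normalized phi <-> forall U W (s : chain C p U W), phi U W s (x1 1) = 0.
Proof.
split; first by move=> H U W s; apply: (H U W s (x1 1) ord0).
move=> H U W s x j hx; rewrite (args1E x).
have e : j = ord0 by apply: val_inj; case: j {hx} => -[].
by rewrite -e hx.
Qed.

Lemma normalized_Fv (f : Cpq A 1 1) :
  normalized f <-> forall V U (u : Mor C V U), Fv f u 1 = 0.
Proof.
apply: (iff_trans (normalized_unary _)); split; first by move=> H V U u; apply: H.
by move=> H U W s; elim/chain1_ind: s => V U0 u; apply: H.
Qed.

Lemma normalized_Gv (g : Cpq A 0 1) :
  normalized g <-> forall U, Gv g (1 : Alg U) = 0.
Proof.
apply: (iff_trans (normalized_unary _)); split; first by move=> H U; apply: H.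
by move=> H U W s; elim/chain0_ind: s => U0; apply: H.
Qed.

Lemma normalized_nullary p (phi : Cpq A p 0) : normalized phi.
Proof. by move=> U W s x []. Qed.

Lemma reduced_vertex q (phi : Cpq A 0 q) : reduced phi.
Proof. by move=> U W s x; elim/chain0_ind: s x. Qed.

Lemma reduced_edge q (f : Cpq A 1 q) :
  reduced f <-> forall U x, f U U (s1 (idmor U)) x = 0.
Proof.
split; first by move=> H U x; apply: H; left.
move=> H U W s; elim/chain1_ind: s => V U0 u x [hu|//].
by move: x; case: hu => X x; apply: H.
Qed.

Lemma reduced_Tv (t : Cpq A 1 0) : reduced t <-> forall U, Tv t (idmor U) = 0.
Proof.
split; first by move=> /reduced_edge H U; apply: H.
by move=> H; apply/reduced_edge => U x; rewrite (args0E x); apply: H.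
Qed.

Lemma reduced_Cv (c : Cpq A 2 0) :
  reduced c <->
  forall V U (u : Mor C V U), Cv c u (idmor V) = 0 /\ Cv c (idmor U) u = 0.
Proof.
split; first by move=> H V U u; split; apply: H; [left|right; left].
move=> H U W s; elim/chain2_ind: s => W0 V U0 u v x.
rewrite (args0E x) => -[hv|[hu|//]].
- by move: u; case: hv => X u; case: (H _ _ u).
- by move: v; case: hu => X v; case: (H _ _ v).
Qed.

Lemma TvN (t : Cpq A 1 0) V U (u : Mor C V U) : Tv (oppC t) u = - Tv t u.
Proof. by []. Qed.

Lemma reduced_oppC_Tv (t : Cpq A 1 0) :
  reduced (oppC t) <-> forall U, Tv t (idmor U) = 0.
Proof.
apply: (iff_trans (reduced_Tv _)); split=> H U; have := H U; rewrite TvN.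
- by move/eqP; rewrite oppr_eq0 => /eqP.
- by move=> _; rewrite H oppr0.
Qed.

Lemma multilinear_nullary U W (phi : ('I_0 -> Alg W) -> Alg U) : multilinear phi.
Proof. by move=> x []. Qed.

Lemma multilinear_unary U W (phi : ('I_1 -> Alg W) -> Alg U) :
  (forall (a : k) y z, phi (x1 (a *: y + z)) = a *: phi (x1 y) + phi (x1 z)) ->
  multilinear phi.
Proof.
move=> H x j a y z.
have updE w : upd x j w = x1 w.
  apply: functional_extensionality => i; rewrite /upd.
  by have -> : i == j by apply/eqP/val_inj; case: i j => -[] // ? [] [].
by rewrite !updE H.
Qed.

Lemma multilinear_binary U W (phi : ('I_2 -> Alg W) -> Alg U) :
  (forall (a : k) y z b, phi (x2 (a *: y + z) b) = a *: phi (x2 y b) + phi (x2 z b)) ->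
  (forall (a : k) y z b, phi (x2 b (a *: y + z)) = a *: phi (x2 b y) + phi (x2 b z)) ->
  multilinear phi.
Proof.
move=> H1 H2 x j a y z.
case: j => -[|[|//]] hj.
- have updE w : upd x (Ordinal hj) w = x2 w (x ord_max).
    apply: functional_extensionality => -[[|[|//]] hi]; rewrite /upd /x2 //=.
    by congr x; apply: val_inj.
  by rewrite !updE H1.
- have updE w : upd x (Ordinal hj) w = x2 (x ord0) w.
    apply: functional_extensionality => -[[|[|//]] hi]; rewrite /upd /x2 //=.
    by congr x; apply: val_inj.
  by rewrite !updE H2.
Qed.

Lemma Mv_linearr (m : Cpq A 0 2) : inC m ->
  forall U (a : k) (y z b : Alg U), Mv m b (a *: y + z) = a *: Mv m b y + Mv m b z.
Proof.
move=> H U a y z b.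
have updE w : upd (x2 b 0) ord_max w = x2 b w.
  by apply: functional_extensionality => -[[|[|//]] hi].
by have := H U U (s0 U) (x2 b 0) ord_max a y z; rewrite !updE.
Qed.

Lemma inC_zero p q : inC (@zeroC _ _ A p q).
Proof. by move=> U W s x j a y z; rewrite /zeroC scaler0 addr0. Qed.

Lemma inCbar_zero p q : inCbar (@zeroC _ _ A p q).
Proof. by split; [exact: inC_zero | move=> * | move=> *]. Qed.

Lemma inC_add p q (phi psi : Cpq A p q) : inC phi -> inC psi -> inC (Defs.addC phi psi).
Proof. by move=> H1 H2 U W s x j a y z; rewrite /Defs.addC H1 H2 scalerDr; abel. Qed.

Lemma inC_opp p q (phi : Cpq A p q) : inC phi -> inC (oppC phi).
Proof. by move=> H U W s x j a y z; rewrite /oppC H scalerN opprD. Qed.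

Lemma inC_sub p q (phi psi : Cpq A p q) : inC phi -> inC psi -> inC (subC phi psi).
Proof. by move=> H1 H2; apply: inC_add H1 (inC_opp H2). Qed.

Lemma inC_scale p q (b : k) (phi : Cpq A p q) : inC phi -> inC (scC b phi).
Proof. by move=> H U W s x j a y z; rewrite /scC H scalerDr !scalerA mulrC. Qed.

Lemma mbarE (m : Cpq A 0 2) U (a b : Deps A U) :
  mbar m a b = (a.1 * b.1, a.1 * b.2 + a.2 * b.1 + Mv m a.1 b.1).
Proof. by []. Qed.
Lemma fbarE (f : Cpq A 1 1) V U (u : Mor C V U) (a : Deps A U) :
  fbar f u a = (res A u a.1, res A u a.2 + Fv f u a.1).
Proof. by []. Qed.
Lemma cbarE (c : Cpq A 2 0) W V U (u : Mor C V U) (v : Mor C W V) :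
  cbar c u v = (1, Cv c u v).
Proof. by []. Qed.
Lemma gbarE (g : Cpq A 0 1) U (a : Deps A U) : gbar g a = (a.1, a.2 + Gv g a.1).
Proof. by []. Qed.
Lemma taubarE (t : Cpq A 1 0) V U (u : Mor C V U) : taubar t u = (1, Tv t u).
Proof. by []. Qed.

Ltac eps_simpl1 :=
  rewrite ?mbarE ?fbarE ?cbarE ?gbarE ?taubarE /= ?rmorph0 ?rmorph1 ?res_id
    ?rmorphD ?rmorphM ?mulrDl ?mulrDr ?mulr0 ?mul0r ?mulr1 ?mul1r ?addr0 ?add0r ?mulrA.
Ltac eps_simpl := eps_simpl1; eps_simpl1.

Definition normal2 (x : C2 A) : Prop :=
  let: (m, f, c) := x in
  [/\ (forall U (a : Alg U), Mv m 1 a = 0 /\ Mv m a 1 = 0),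
      (forall V U (u : Mor C V U), Fv f u 1 = 0),
      (forall U (a : Alg U), Fv f (idmor U) a = 0) &
      (forall V U (u : Mor C V U), Cv c u (idmor V) = 0 /\ Cv c (idmor U) u = 0)].

Lemma inCbar2_normal2 (x : C2 A) : inCbar2 x -> normal2 x.
Proof.
case: x => [[m f] c].
case=> [[_ /normalized_Mv HM _] [_ /normalized_Fv HF1 /reduced_edge HFid]
        [_ _ /reduced_Cv Hc]].
by split => // U a; apply: HFid.
Qed.

Lemma normal2_inCbar2 (x : C2 A) : inC2 x -> normal2 x -> inCbar2 x.
Proof.
case: x => [[m f] c] [Im If Ic] [HM HF1 HFid Hc]; split; split => //.
- exact/normalized_Mv.
- exact: reduced_vertex.
- exact/normalized_Fv.
- by apply/reduced_edge => U x; rewrite (args1E x); apply: HFid.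
- exact: normalized_nullary.
- exact/reduced_Cv.
Qed.

Lemma twisted_def_normal_cocycle (x : C2 A) :
  is_twisted_def x -> normal2 x /\ cocycle_eqs x.
Proof.
case: x => [[m f] c] /= [Has [Hun [Hmul [Hf1 [Hid [_ [Hcom [Hcoc Hc1]]]]]]]].
have HM U (a : Alg U) : Mv m 1 a = 0 /\ Mv m a 1 = 0.
  have [h1 h2] := Hun U (a, 0).
  by move/(congr1 snd): h1; move/(congr1 snd): h2; eps_simpl => -> ->.
have HF1 V U (u : Mor C V U) : Fv f u 1 = 0.
  by have := Hf1 V U u; move/(congr1 snd); eps_simpl.
have HFid U (a : Alg U) : Fv f (idmor U) a = 0.
  by have := Hid U (a, 0); move/(congr1 snd); eps_simpl.
split; first split => //.
  move=> V U u; have [h1 h2] := Hc1 V U u.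
  by move/(congr1 snd): h1; move/(congr1 snd): h2.
split.
- move=> U a b e; have := Has U (a, 0) (b, 0) (e, 0); move/(congr1 snd); eps_simpl.
  by move=> h; symmetry; abel_from h.
- move=> V U u a b; have := Hmul V U u (a, 0) (b, 0); move/(congr1 snd); eps_simpl.
  by move=> h; abel_from h.
- move=> W V U u v a; have := Hcom W V U u v (a, 0); move/(congr1 snd); eps_simpl.
  rewrite res_comp; have [-> ->] := HM _ (res A v (res A u a)).
  by rewrite addr0 => h; abel_from h.
- move=> X W V U u v w; have := Hcoc X W V U u v w; move/(congr1 snd); eps_simpl.
  rewrite HF1 addr0; have [-> _] := HM X 1; rewrite !addr0 => h.
  by symmetry; abel_from h.
Qed.

Lemma normal_cocycle_twisted_def (x : C2 A) :
  normal2 x -> cocycle_eqs x -> is_twisted_def x.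
Proof.
case: x => [[m f] c] [HM HF1 HFid Hc1] [Z1 Z2 Z3 Z4] /=.
split.
  move=> U [a1 a2] [b1 b2] [c1 c2]; eps_simpl; congr (_, _).
  by have h := Z1 U a1 b1 c1; rewrite ?mulrA in h; abel_from h.
split.
  move=> U [a1 a2]; eps_simpl; have [-> ->] := HM U a1.
  by rewrite !addr0.
split.
  move=> V U u [a1 a2] [b1 b2]; eps_simpl; congr (_, _).
  by have h := Z2 V U u a1 b1; abel_from h.
split; first by move=> V U u; rewrite /oneD; eps_simpl; rewrite HF1.
split; first by move=> U [a1 a2]; eps_simpl; rewrite HFid addr0.
split.
  move=> W V U u v; exists (1, - Cv c u v); eps_simpl; have [-> _] := HM W 1.
  by rewrite !addr0 addNr addrN.
split.
  move=> W V U u v [a1 a2]; eps_simpl; rewrite !res_comp.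
  have [-> ->] := HM W (res A v (res A u a1)); rewrite !addr0; congr (_, _).
  by have h := Z3 W V U u v a1; abel_from h.
split.
  move=> X W V U u v w; eps_simpl; rewrite HF1.
  have [-> _] := HM X 1; rewrite !addr0; congr (_, _).
  by have h := Z4 X W V U u v w; abel_from h.
by move=> V U u; have [h1 h2] := Hc1 V U u; rewrite !cbarE h1 h2.
Qed.

Lemma gbar_bij (g : Cpq A 0 1) U : bijective (@gbar _ _ A g U).
Proof.
exists (fun a => (a.1, a.2 - Gv g a.1)) => -[a1 a2]; rewrite gbarE /=.
- by rewrite addrK.
- by rewrite subrK.
Qed.

Lemma twisted_isoP (x x' : C2 A) (g : Cpq A 0 1) (t : Cpq A 1 0) : normal2 x' ->
  (is_twisted_iso x x' g t <->
   [/\ (forall U, Gv g (1 : Alg U) = 0), (forall U, Tv t (idmor U) = 0) &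
       coboundary_eqs g (oppC t) x x']).
Proof.
case: x => [[m f] c]; case: x' => [[m' f'] c'] [HM HF1 _ _] /=; split.
- case=> [Hg1 [Hmul [_ [Hcom [Hcoc [Htid _]]]]]].
  have HG U : Gv g (1 : Alg U) = 0.
    by have := Hg1 U; rewrite /oneD; eps_simpl; move/(congr1 snd).
  split => //.
    by move=> U; have := Htid U; rewrite /oneD; eps_simpl; move/(congr1 snd).
  split.
  + move=> U a b; have := Hmul U (a, 0) (b, 0); eps_simpl; move/(congr1 snd) => /= h.
    by abel_from h.
  + move=> V U u a; have := Hcom V U u (a, 0); eps_simpl; move/(congr1 snd) => /=.
    have [-> ->] := HM V (res A u a).
    by rewrite !TvN !addr0 => h; abel_from h.
  + move=> W V U u v; have := Hcoc W V U u v; eps_simpl; move/(congr1 snd) => /=.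
    rewrite HG HF1 !TvN; have [-> _] := HM W 1; rewrite !addr0 => h.
    by abel_from h.
- case=> HG Htid [E1 E2 E3].
  split; first by move=> U; rewrite /oneD; eps_simpl; rewrite HG.
  split.
    move=> U [a1 a2] [b1 b2]; eps_simpl; congr (_, _).
    by have h := E1 U a1 b1; abel_from h.
  split.
    move=> V U u; exists (1, - Tv t u); eps_simpl; have [-> _] := HM V 1.
    by rewrite !addr0 addNr addrN.
  split.
    move=> V U u [a1 a2]; eps_simpl; congr (_, _).
    have [-> ->] := HM V (res A u a1).
    by have h := E2 V U u a1; rewrite !TvN in h; rewrite !addr0; abel_from h.
  split.
    move=> W V U u v; eps_simpl; rewrite HG HF1; have [-> _] := HM W 1.
    rewrite !addr0; congr (_, _).
    by have h := E3 W V U u v; rewrite !TvN in h; abel_from h.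
  split; first by move=> U; rewrite /oneD taubarE Htid.
  by move=> U; exact: gbar_bij.
Qed.

Lemma presheaf_isoP (m m' : Cpq A 0 2) (f f' : Cpq A 1 1) (g : Cpq A 0 1) :
  is_presheaf_iso m f m' f' g <->
  (forall U, Gv g (1 : Alg U) = 0) /\
  coboundary_eqs g (@zeroC _ _ A 1 0) (trunc2 m f) (trunc2 m' f').
Proof.
split.
- case=> Hg1 Hmul Hcom _.
  have HG U : Gv g (1 : Alg U) = 0.
    by have := Hg1 U; rewrite /oneD; eps_simpl; move/(congr1 snd).
  split => //; split.
  + move=> U a b; have := Hmul U (a, 0) (b, 0); eps_simpl; move/(congr1 snd) => /= h.
    by abel_from h.
  + move=> V U u a; have := Hcom V U u (a, 0); eps_simpl; move/(congr1 snd) => /= h.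
    by abel_from h.
  + by move=> W V U u v; rewrite /Tv /Cv /zeroC rmorph0 !subrr add0r.
- case=> HG [E1 E2 _]; split.
  + by move=> U; rewrite /oneD; eps_simpl; rewrite HG.
  + move=> U [a1 a2] [b1 b2]; eps_simpl; congr (_, _).
    by have h := E1 U a1 b1; abel_from h.
  + move=> V U u [a1 a2]; eps_simpl; congr (_, _).
    have h := E2 V U u a1; rewrite /Tv /zeroC mulr0 mul0r subrr addr0 in h.
    by abel_from h.
  + by move=> U; exact: gbar_bij.
Qed.

Lemma coboundary_eqs_oppC (g : Cpq A 0 1) (t : Cpq A 1 0) (x x' : C2 A) :
  coboundary_eqs g t x x' -> coboundary_eqs g (oppC (oppC t)) x x'.
Proof.
case: x => [[m f] c]; case: x' => [[m' f'] c'] [E1 E2 E3].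
by split=> // *; rewrite !TvN !opprK; [apply: E2 | apply: E3].
Qed.

Lemma coboundary_eqs_refl (g : Cpq A 0 1) (t : Cpq A 1 0) (x : C2 A) :
  (forall U (a : Alg U), Gv g a = 0) -> (forall V U (u : Mor C V U), Tv t u = 0) ->
  coboundary_eqs g t x x.
Proof.
case: x => [[m f] c] HG HT.
by split=> *; rewrite ?HG ?HT ?rmorph0 ?mulr0 ?mul0r; abel.
Qed.

Definition unit_gauge (m : Cpq A 0 2) : Cpq A 0 1 :=
  fun U W s x => m U W s (x2 1 (x ord0)).
Definition unit_twist (c : Cpq A 2 0) : Cpq A 1 0 :=
  fun V U s x => c V V (s2 (idmor V) (idmor V)) (x0 A).

Lemma Gv_unit_gauge m U (a : Alg U) : Gv (unit_gauge m) a = Mv m 1 a.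
Proof. by []. Qed.
Lemma Tv_unit_twist c V U (u : Mor C V U) :
  Tv (unit_twist c) u = Cv c (idmor V) (idmor V).
Proof. by []. Qed.

Lemma MvB (m1 m2 : Cpq A 0 2) U (a b : Alg U) :
  Mv (subC m1 m2) a b = Mv m1 a b - Mv m2 a b.
Proof. by []. Qed.
Lemma FvB (f1 f2 : Cpq A 1 1) V U (u : Mor C V U) a :
  Fv (subC f1 f2) u a = Fv f1 u a - Fv f2 u a.
Proof. by []. Qed.
Lemma CvB (c1 c2 : Cpq A 2 0) W V U (u : Mor C V U) (v : Mor C W V) :
  Cv (subC c1 c2) u v = Cv c1 u v - Cv c2 u v.
Proof. by []. Qed.

Lemma Mv_dGS1 g t U (a b : Alg U) :
  Mv (dGS1 (g, t)).1.1 a b = a * Gv g b - Gv g (a * b) + Gv g a * b.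
Proof. exact: dH_01. Qed.
Lemma Fv_dGS1 g t V U (u : Mor C V U) (a : Alg U) :
  Fv (dGS1 (g, t)).1.2 u a =
  res A u (Gv g a) - Gv g (res A u a) + (res A u a * Tv t u - Tv t u * res A u a).
Proof. by rewrite /Fv /= /Defs.addC /scC /sgn scale_sign /= dS_01 dH_10. Qed.
Lemma Cv_dGS1 g t W V U (u : Mor C V U) (v : Mor C W V) :
  Cv (dGS1 (g, t)).2 u v = res A v (Tv t u) - Tv t (mcomp u v) + Tv t v.
Proof. by rewrite /Cv /= /scC /sgn scale_sign /= dS_10. Qed.

Definition normalize2 (x : C2 A) : C2 A :=
  let: (m, f, c) := x in subC2 x (dGS1 (unit_gauge m, unit_twist c)).

Ltac res_simpl := rewrite ?rmorphB ?rmorphD ?rmorphN ?rmorphM ?res_comp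
  ?mulrBr ?mulrBl ?mulrDl ?mulrDr ?mulrN ?mulNr ?mulrA.

Lemma cocycle_eqs_normalize (x : C2 A) : cocycle_eqs x -> cocycle_eqs (normalize2 x).
Proof.
case: x => [[m f] c] [Z1 Z2 Z3 Z4]; split.
- move=> U a b e; rewrite !MvB !Mv_dGS1; res_simpl.
  by have h := Z1 U a b e; rewrite ?mulrA in h; abel_from h.
- move=> V U u a b; rewrite !MvB !Mv_dGS1 !FvB !Fv_dGS1; res_simpl.
  by have h := Z2 V U u a b; rewrite ?mulrA in h; abel_from h.
- move=> W V U u v a; rewrite !CvB !Cv_dGS1 !FvB !Fv_dGS1; res_simpl.
  by have h := Z3 W V U u v a; rewrite ?mulrA in h; abel_from h.
- move=> X W V U u v w; rewrite !CvB !Cv_dGS1; res_simpl.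
  by have h := Z4 X W V U u v w; abel_from h.
Qed.

(* Each normalization identity is an instance of a cocycle equation at units
   and identity morphisms. *)
Lemma normal2_normalize (x : C2 A) : cocycle_eqs x -> normal2 (normalize2 x).
Proof.
case: x => [[m f] c] [Z1 Z2 Z3 Z4]; split.
- move=> U a; rewrite !MvB !Mv_dGS1 !Gv_unit_gauge; split.
  + have h := Z1 U 1 1 a; rewrite !mul1r in h; rewrite !mul1r.
    by abel_from h.
  + have h := Z1 U a 1 1; rewrite !mul1r !mulr1 in h; rewrite !mulr1.
    by abel_from h.
- move=> V U u; rewrite !FvB !Fv_dGS1 !Gv_unit_gauge !Tv_unit_twist rmorph1 mul1r mulr1.
  have h := Z2 V U u 1 1; rewrite !rmorph1 !mul1r !mulr1 in h.
  by abel_from h.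
- move=> U a; rewrite !FvB !Fv_dGS1 !Gv_unit_gauge !Tv_unit_twist !res_id.
  have h := Z3 U U U (idmor U) (idmor U) a; rewrite !res_id comp1m in h.
  by abel_from h.
- move=> V U u; rewrite !CvB !Cv_dGS1 !Tv_unit_twist; split.
  + have h := Z4 V V V U u (idmor V) (idmor V); rewrite !res_id !compm1 in h.
    by rewrite res_id; abel_from h.
  + have h := Z4 V U U U (idmor U) (idmor U) u; rewrite !comp1m in h.
    by abel_from h.
Qed.

Lemma resP V U (u : Mor C V U) (a : k) (y z : Alg U) :
  res A u (a *: y + z) = a *: res A u y + res A u z.
Proof. by rewrite linearP. Qed.

Ltac linear_simpl := rewrite ?resP ?rmorphD ?mulrDl ?mulrDr -?scalerAl -?scalerAr
  ?scalerDr ?scalerBr ?scalerN.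

Lemma inC_normalize (m : Cpq A 0 2) (f : Cpq A 1 1) (c : Cpq A 2 0) :
  inC2 (m, f, c) ->
  inC1 (unit_gauge m, unit_twist c) /\ inC2 (normalize2 (m, f, c)).
Proof.
case=> /= Im If Ic; have MR := Mv_linearr Im.
have Ig : inC (unit_gauge m).
  move=> U W s; elim/chain0_ind: s => U0; apply: multilinear_unary => a y z.
  exact: (MR U0 a y z 1).
have It : inC (unit_twist c) by move=> U W s; exact: multilinear_nullary.
split; first by [].
split => /=.
- apply: inC_sub => // U W s; elim/chain0_ind: s => U0.
  by apply: multilinear_binary => a y z b;
    rewrite !dH_01 !Gv_unit_gauge; linear_simpl; rewrite ?MR; linear_simpl; abel.
- apply: inC_sub => //; apply: inC_add.
  + apply: inC_scale => U W s; elim/chain1_ind: s => V U0 u.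
    apply: multilinear_unary => a y z.
    by rewrite !dS_01 !Gv_unit_gauge; linear_simpl; rewrite ?MR; linear_simpl; abel.
  + move=> U W s; elim/chain1_ind: s => V U0 u; apply: multilinear_unary => a y z.
    by rewrite !dH_10; linear_simpl; abel.
- by apply: inC_sub => //; apply: inC_scale => U W s; exact: multilinear_nullary.
Qed.

Lemma twisted_def_cocycleP (m1 : Cpq A 0 2) (f1 : Cpq A 1 1) (c1 : Cpq A 2 0) :
  inC m1 -> inC f1 -> inC c1 ->
  (is_twisted_def (m1, f1, c1) <->
   inCbar2 (m1, f1, c1) /\ zero3 (dGS2 (m1, f1, c1))).
Proof.
move=> Im If Ic; split.
- move=> /twisted_def_normal_cocycle [N Z].
  by split; [apply: normal2_inCbar2 | apply/dGS2_eq0P].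
- by case=> /inCbar2_normal2 N /dGS2_eq0P Z; apply: normal_cocycle_twisted_def.
Qed.

Lemma presheaf_def_cocycleP (m1 : Cpq A 0 2) (f1 : Cpq A 1 1) :
  inC m1 -> inC f1 ->
  (is_presheaf_def m1 f1 <->
   [/\ inCbar m1, inCbar f1 & zero3 (dGS2 (trunc2 m1 f1))]).
Proof.
move=> Im If; have H := twisted_def_cocycleP Im If (@inC_zero 2 0).
split; first by move=> /H [[? ? ?] ?]; split.
by case=> ? ? ?; apply/H; split => //; split => //; exact: inCbar_zero.
Qed.

Lemma Z2bar_twisted_def (x : C2 A) : Z2bar x -> is_twisted_def x.
Proof.
case=> /inCbar2_normal2 N /dGS2_eq0P Z; exact: normal_cocycle_twisted_def.
Qed.

Lemma Z2tbar_Z2bar (m : Cpq A 0 2) (f : Cpq A 1 1) : Z2tbar m f -> Z2bar (trunc2 m f).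
Proof. by case=> ? ? ?; split => //; split => //; exact: inCbar_zero. Qed.

Lemma twisted_iso_coboundaryP (x x' : C2 A) (g1 : Cpq A 0 1) (t1 : Cpq A 1 0) :
  Z2bar x' -> inC g1 -> inC (oppC t1) ->
  (is_twisted_iso x x' g1 t1 <->
   inCbar1 (g1, oppC t1) /\ eqC2 (dGS1 (g1, oppC t1)) (subC2 x x')).
Proof.
move=> [/inCbar2_normal2 N' _] Ig It; split.
- move/(twisted_isoP _ _ _ N') => [HG Ht /dGS1_eqP Cb]; split => //.
  split; split => //; [exact/normalized_Gv | exact: reduced_vertex |
                       exact: normalized_nullary | exact/reduced_oppC_Tv].
- case=> [[[_ /normalized_Gv HG _] [_ _ /reduced_oppC_Tv Ht]] /dGS1_eqP Cb].
  exact/(twisted_isoP _ _ _ N').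
Qed.

Lemma presheaf_iso_coboundaryP (m1 m1' : Cpq A 0 2) (f1 f1' : Cpq A 1 1)
    (g1 : Cpq A 0 1) :
  inC g1 ->
  (is_presheaf_iso m1 f1 m1' f1' g1 <->
   inCbar g1 /\ eqC2 (dGS1 (trunc1 g1)) (subC2 (trunc2 m1 f1) (trunc2 m1' f1'))).
Proof.
move=> Ig; split.
- move/presheaf_isoP => [HG /dGS1_eqP Cb]; split => //.
  by split => //; [exact/normalized_Gv | exact: reduced_vertex].
- by case=> [[_ /normalized_Gv HG _] /dGS1_eqP Cb]; apply/presheaf_isoP.
Qed.

Lemma cohom_bar_equiv_tw (x x' : C2 A) :
  Z2bar x' -> (cohom_bar x x' <-> equiv_tw x x').
Proof.
move=> [/inCbar2_normal2 N' _]; split.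
- case=> [[g t]] [[[Ig HGn _] [It _ /reduced_Tv Htr]] /dGS1_eqP Cb].
  exists g, (oppC t); split => //; split; first exact: inC_opp.
  apply/(twisted_isoP _ _ _ N'); split.
  + exact/normalized_Gv.
  + by move=> U; rewrite TvN Htr oppr0.
  + exact: coboundary_eqs_oppC.
- case=> g [t [Ig [It /(twisted_isoP _ _ _ N') [HG Ht Cb]]]].
  exists (g, oppC t); split; last exact/dGS1_eqP.
  split; split => //; [exact/normalized_Gv | exact: reduced_vertex |
    exact: inC_opp | exact: normalized_nullary | exact/reduced_oppC_Tv].
Qed.

Lemma twisted_def_equiv_Z2bar (x' : C2 A) :
  inC2 x' -> is_twisted_def x' -> exists x, Z2bar x /\ equiv_tw x x'.
Proof.
move=> Ix' /twisted_def_normal_cocycle [N Z].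
exists x'; split; first by split; [exact: normal2_inCbar2 | exact/dGS2_eq0P].
exists (@zeroC _ _ A 0 1), (@zeroC _ _ A 1 0); do 2!(split; first exact: inC_zero).
apply/(twisted_isoP _ _ _ N); split=> //.
by apply: coboundary_eqs_refl => *; rewrite /Tv /Gv /oppC /zeroC ?oppr0.
Qed.

Lemma cocycle_cohom_Z2bar (z : C2 A) :
  inC2 z -> zero3 (dGS2 z) -> exists x, Z2bar x /\ cohom_full z x.
Proof.
case: z => [[m f] c] Iz /dGS2_eq0P Z; have [Iy Ix] := inC_normalize Iz.
exists (normalize2 (m, f, c)); split.
- split; first exact: normal2_inCbar2 (normal2_normalize Z).
  exact/dGS2_eq0P/cocycle_eqs_normalize.
- exists (unit_gauge m, unit_twist c); split => //.
  apply/dGS1_eqP; split=> *; rewrite ?MvB ?Mv_dGS1 ?FvB ?Fv_dGS1 ?CvB ?Cv_dGS1; abel.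
Qed.

(* A cochain whose coboundary is the difference of two normalized reduced
   cocycles is itself normalized and reduced: evaluate at [1, 1], resp. at
   [(idmor U, idmor U)]. *)
Lemma cohom_full_bar (x x' : C2 A) :
  Z2bar x -> Z2bar x' -> cohom_full x x' <-> cohom_bar x x'.
Proof.
move=> [/inCbar2_normal2 N _] [/inCbar2_normal2 N' _]; split; last first.
  by case=> [[g t]] [[[Ig _ _] [It _ _]] E]; exists (g, t).
case=> [[g t]] [[Ig It] E]; exists (g, t); split => //.
move/dGS1_eqP: E; case: x N => [[m f] c]; case: x' N' => [[m' f'] c'].
case=> HM _ _ Hc; case=> HM' _ _ Hc'; case=> E1 _ E3.
split; split => //.
- apply/normalized_Gv => U; have := E1 U 1 1.
  case: (HM U 1) => -> _; case: (HM' U 1) => -> _.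
  by rewrite !mul1r !mulr1 => h; abel_from h.
- exact: reduced_vertex.
- exact: normalized_nullary.
- apply/reduced_Tv => U; have := E3 U U U (idmor U) (idmor U).
  case: (Hc U U (idmor U)) => -> _; case: (Hc' U U (idmor U)) => -> _.
  by rewrite !res_id comp1m => h; abel_from h.
Qed.

Lemma Z2tbar_presheaf_def (m : Cpq A 0 2) (f : Cpq A 1 1) :
  Z2tbar m f -> is_presheaf_def m f.
Proof. by move/Z2tbar_Z2bar/Z2bar_twisted_def. Qed.

Lemma cohom_tbar_equiv_pr (m m' : Cpq A 0 2) (f f' : Cpq A 1 1) :
  cohom_tbar m f m' f' <-> equiv_pr m f m' f'.
Proof.
split.
- case=> g [[Ig HGn _] E]; exists g; split => //.
  by apply/presheaf_isoP; split; [exact/normalized_Gv | exact/dGS1_eqP].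
- case=> g [Ig /presheaf_isoP [HG /dGS1_eqP Cb]]; exists g; split => //.
  by split => //; [exact/normalized_Gv | exact: reduced_vertex].
Qed.

Lemma presheaf_def_equiv_Z2tbar (m' : Cpq A 0 2) (f' : Cpq A 1 1) :
  inC m' -> inC f' -> is_presheaf_def m' f' ->
  exists m f, Z2tbar m f /\ equiv_pr m f m' f'.
Proof.
move=> Im If Dp; exists m', f'; split; first exact/presheaf_def_cocycleP.
exists (@zeroC _ _ A 0 1); split; first exact: inC_zero.
by apply/presheaf_isoP; split=> //; apply: coboundary_eqs_refl.
Qed.

End FirstOrderDeformations.

Theorem theorem2p21 (k : comPzRingType) (C : smallcat) (A : presheaf k C) :
  (* 1(a) *)
  (forall (m1 : Cpq A 0 2) (f1 : Cpq A 1 1) (c1 : Cpq A 2 0),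
      inC m1 -> inC f1 -> inC c1 ->
      (is_twisted_def (m1, f1, c1) <->
       inCbar2 (m1, f1, c1) /\ zero3 (dGS2 (m1, f1, c1)))) /\
  (* 1(b) *)
  (forall (m1 : Cpq A 0 2) (f1 : Cpq A 1 1),
      inC m1 -> inC f1 ->
      (is_presheaf_def m1 f1 <->
       [/\ inCbar m1, inCbar f1 & zero3 (dGS2 (trunc2 m1 f1))])) /\
  (* 2(a) *)
  (forall (x x' : C2 A) (g1 : Cpq A 0 1) (t1 : Cpq A 1 0),
      Z2bar x -> Z2bar x' -> inC g1 -> inC (oppC t1) ->
      (is_twisted_iso x x' g1 t1 <->
       inCbar1 (g1, oppC t1) /\ eqC2 (dGS1 (g1, oppC t1)) (subC2 x x'))) /\
  (* 2(b) *)
  (forall (m1 m1' : Cpq A 0 2) (f1 f1' : Cpq A 1 1) (g1 : Cpq A 0 1),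
      Z2tbar m1 f1 -> Z2tbar m1' f1' -> inC g1 ->
      (is_presheaf_iso m1 f1 m1' f1' g1 <->
       inCbar g1 /\ eqC2 (dGS1 (trunc1 g1)) (subC2 (trunc2 m1 f1) (trunc2 m1' f1')))) /\
  (* 3(a): [x] |-> [deformation of x] is a well-defined bijection
     H^2 bar C'_GS(A) -> Def_tw(A) ... *)
  ((forall x : C2 A, Z2bar x -> is_twisted_def x) /\
   (forall x x' : C2 A, Z2bar x -> Z2bar x' -> (cohom_bar x x' <-> equiv_tw x x')) /\
   (forall x' : C2 A, inC2 x' -> is_twisted_def x' ->
      exists x : C2 A, Z2bar x /\ equiv_tw x x')) /\
  (* ... and the inclusion bar C'_GS(A) -> C_GS(A) induces HH^2(A) = H^2 bar C'_GS(A) *)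
  ((forall z : C2 A, inC2 z -> zero3 (dGS2 z) ->
      exists x : C2 A, Z2bar x /\ cohom_full z x) /\
   (forall x x' : C2 A, Z2bar x -> Z2bar x' -> (cohom_full x x' <-> cohom_bar x x'))) /\
  (* 3(b): [(m1,f1)] |-> [presheaf deformation] is a well-defined bijection
     H^2 bar C'_tGS(A) -> Def_pr(A) *)
  ((forall (m1 : Cpq A 0 2) (f1 : Cpq A 1 1), Z2tbar m1 f1 -> is_presheaf_def m1 f1) /\
   (forall (m1 m1' : Cpq A 0 2) (f1 f1' : Cpq A 1 1),
      Z2tbar m1 f1 -> Z2tbar m1' f1' ->
      (cohom_tbar m1 f1 m1' f1' <-> equiv_pr m1 f1 m1' f1')) /\
   (forall (m1' : Cpq A 0 2) (f1' : Cpq A 1 1),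
      inC m1' -> inC f1' -> is_presheaf_def m1' f1' ->
      exists (m1 : Cpq A 0 2) (f1 : Cpq A 1 1),
        Z2tbar m1 f1 /\ equiv_pr m1 f1 m1' f1')).
Proof.
split; first exact: twisted_def_cocycleP.
split; first exact: presheaf_def_cocycleP.
split; first by move=> x x' g1 t1 _ Zx'; apply: twisted_iso_coboundaryP.
split; first by move=> m1 m1' f1 f1' g1 _ _; apply: presheaf_iso_coboundaryP.
split; first split; [exact: Z2bar_twisted_def | split |].
- by move=> x x' _; apply: cohom_bar_equiv_tw.
- exact: twisted_def_equiv_Z2bar.
split; first split; [exact: cocycle_cohom_Z2bar | exact: cohom_full_bar |].
split; first exact: Z2tbar_presheaf_def.
split; first by move=> m1 m1' f1 f1' _ _; apply: cohom_tbar_equiv_pr.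
exact: presheaf_def_equiv_Z2tbar.
Qed.
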